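(* There is an absolute constant $C$ such that the following holds for every integer $K\ge2$. Let $\mathcal{Z}=\{z_0,\dots,z_K\}$ with $z_0=\sin^2\frac{\pi}{4K}$, $z_i=\sin^2\frac{\pi i}{2K}$ for $1\le i\le K-1$, and $z_K=\cos^2\frac{\pi}{4K}$. Let $p\in[0,1]$ and let $p^-,p^+$ be neighbouring points of $\mathcal{Z}$ (i.e. $p^-=z_i$, $p^+=z_{i+1}$ for some $i$) with $p^-\le p<p^+$. Let $q$ be the random variable taking value $p^-$ with probability proportional to $\frac{p^+-p}{p^+(1-p^+)}$ and value $p^+$ with probability proportional to $\frac{p-p^-}{p^-(1-p^-)}$. Then for all $y\in\{0,1\}$, $\mathbb{E}[\ell(q,y)]-\ell(p,y)\le \frac{C}{K^2}$, where $\ell$ is the log loss.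
   Context: Log loss: $\ell(p,y)=-y\log p-(1-y)\log(1-p)$. *)

From Stdlib Require Import Reals Lra Lia.
Open Scope R_scope.

Definition logloss (p y : R) : R := - y * ln p - (1 - y) * ln (1 - p).

Definition zgrid (K i : nat) : R :=
  if Nat.eqb i 0 then (sin (PI / (4 * INR K))) ^ 2
  else if Nat.eqb i K then (cos (PI / (4 * INR K))) ^ 2
  else (sin (PI * INR i / (2 * INR K))) ^ 2.

Definition w_minus (pm pp p : R) : R := (pp - p) / (pp * (1 - pp)).
Definition w_plus  (pm pp p : R) : R := (p - pm) / (pm * (1 - pm)).

Definition prob_minus (pm pp p : R) : R :=
  w_minus pm pp p / (w_minus pm pp p + w_plus pm pp p).
Definition prob_plus (pm pp p : R) : R :=
  w_plus pm pp p / (w_minus pm pp p + w_plus pm pp p).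

Definition expected_loss_q (pm pp p y : R) : R :=
  prob_minus pm pp p * logloss pm y + prob_plus pm pp p * logloss pp y.

From Stdlib Require Import Reals Lra Lia.
Open Scope R_scope.

(* Since [ln x - ln y <= (x - y) / y], moving the prediction from [p] to a grid
   point [z] costs at most the linearized excess [(p - z) (y - z) / (z (1 - z))].
   For the two-point mixture [q] the terms linear in [y] cancel, and what remains
   is at most [(p+ - p-)^2 / (p- (1 - p-))].  Writing the grid as [z = sin^2 a]
   with angular step [h = PI / (2 K)], the identity
   [sin^2 b - sin^2 a = sin (b - a) sin (b + a)] gives
   [(p+ - p-)^2 <= 36 h^2 p- (1 - p-)], hence the bound [9 PI^2 / K^2]. *)

Lemma ln_le_sub_1 x : 0 < x -> ln x <= x - 1.
Proof.
  intros hx. pose proof (exp_ineq1_le (ln x)) as H. rewrite exp_ln in H; lra.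
Qed.

Lemma ln_sub_ln_le x y : 0 < x -> 0 < y -> ln x - ln y <= (x - y) / y.
Proof.
  intros hx hy.
  assert (hxy : 0 < x / y) by (apply Rdiv_lt_0_compat; lra).
  replace (ln x) with (ln (x / y) + ln y).
  - pose proof (ln_le_sub_1 _ hxy).
    replace ((x - y) / y) with (x / y - 1) by (field; lra). lra.
  - unfold Rdiv. rewrite ln_mult, ln_Rinv by (try apply Rinv_0_lt_compat; lra). ring.
Qed.

Lemma logloss_sub_le q p y : 0 < q < 1 -> 0 < p < 1 -> (y = 0 \/ y = 1) ->
  logloss q y - logloss p y <= (p - q) * (y - q) / (q * (1 - q)).
Proof.
  intros hq hp [-> | ->]; unfold logloss.
  - replace ((p - q) * (0 - q) / (q * (1 - q))) with (((1 - p) - (1 - q)) / (1 - q))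
      by (field; lra).
    pose proof (ln_sub_ln_le (1 - p) (1 - q) ltac:(lra) ltac:(lra)). lra.
  - replace ((p - q) * (1 - q) / (q * (1 - q))) with ((p - q) / q) by (field; lra).
    pose proof (ln_sub_ln_le p q ltac:(lra) ltac:(lra)). lra.
Qed.

Section TwoPointRounding.

Variables pm pp p : R.
Hypotheses (pm_pos : 0 < pm) (pm_le_p : pm <= p) (p_lt_pp : p < pp) (pp_lt_1 : pp < 1).

Lemma w_minus_pos : 0 < w_minus pm pp p.
Proof. unfold w_minus. apply Rdiv_lt_0_compat; [lra|]. apply Rmult_lt_0_compat; lra. Qed.

Lemma w_plus_ge0 : 0 <= w_plus pm pp p.
Proof.
  unfold w_plus, Rdiv. apply Rmult_le_pos; [lra|].
  apply Rlt_le, Rinv_0_lt_compat, Rmult_lt_0_compat; lra.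
Qed.

Lemma prob_minus_ge0 : 0 <= prob_minus pm pp p.
Proof.
  pose proof w_minus_pos; pose proof w_plus_ge0.
  unfold prob_minus. apply Rlt_le, Rdiv_lt_0_compat; lra.
Qed.

Lemma prob_plus_ge0 : 0 <= prob_plus pm pp p.
Proof.
  pose proof w_minus_pos; pose proof w_plus_ge0.
  unfold prob_plus, Rdiv. apply Rmult_le_pos; [lra|].
  apply Rlt_le, Rinv_0_lt_compat; lra.
Qed.

Lemma prob_minus_plus : prob_minus pm pp p + prob_plus pm pp p = 1.
Proof.
  pose proof w_minus_pos; pose proof w_plus_ge0.
  unfold prob_minus, prob_plus. field. lra.
Qed.

(* The weights of q are chosen exactly so that the terms linear in y cancel. *)
Lemma linearized_excess_eq y :
  prob_minus pm pp p * ((p - pm) * (y - pm) / (pm * (1 - pm)))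
  + prob_plus pm pp p * ((p - pp) * (y - pp) / (pp * (1 - pp)))
  = (pp - p) * (p - pm) * (pp - pm)
    / ((pp - p) * (pm * (1 - pm)) + (p - pm) * (pp * (1 - pp))).
Proof.
  assert (0 < pm * (1 - pm)) by (apply Rmult_lt_0_compat; lra).
  assert (0 < pp * (1 - pp)) by (apply Rmult_lt_0_compat; lra).
  unfold prob_minus, prob_plus, w_minus, w_plus.
  field. repeat split; nra.
Qed.

Lemma linearized_excess_le :
  (pp - p) * (p - pm) * (pp - pm)
    / ((pp - p) * (pm * (1 - pm)) + (p - pm) * (pp * (1 - pp)))
  <= (pp - pm) ^ 2 / (pm * (1 - pm)).
Proof.
  set (u := pp - p); set (v := p - pm).
  set (A := pp * (1 - pp)); set (B := pm * (1 - pm)).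
  assert (hA : 0 < A) by (apply Rmult_lt_0_compat; lra).
  assert (hB : 0 < B) by (apply Rmult_lt_0_compat; lra).
  assert (hu : 0 < u) by (unfold u; lra).
  assert (hv : 0 <= v) by (unfold v; lra).
  assert (hD : 0 < u * B + v * A) by nra.
  replace (pp - pm) with (u + v) by (unfold u, v; ring).
  apply Rmult_le_reg_r with (B * (u * B + v * A)); [nra|].
  replace (u * v * (u + v) / (u * B + v * A) * (B * (u * B + v * A)))
    with (u * v * (u + v) * B) by (field; lra).
  replace ((u + v) ^ 2 / B * (B * (u * B + v * A)))
    with ((u + v) ^ 2 * (u * B + v * A)) by (field; lra).
  assert (0 <= (u + v) * (u * u * B + (u + v) * v * A)) by
    (apply Rmult_le_pos; [lra|]; apply Rplus_le_le_0_compat; apply Rmult_le_pos; nra).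
  nra.
Qed.

Lemma expected_loss_q_sub_le y : (y = 0 \/ y = 1) ->
  expected_loss_q pm pp p y - logloss p y <= (pp - pm) ^ 2 / (pm * (1 - pm)).
Proof.
  intros hy.
  pose proof prob_minus_ge0; pose proof prob_plus_ge0.
  pose proof (logloss_sub_le pm p y ltac:(lra) ltac:(lra) hy) as lm.
  pose proof (logloss_sub_le pp p y ltac:(lra) ltac:(lra) hy) as lp.
  eapply Rle_trans; [|apply linearized_excess_le].
  rewrite <- (linearized_excess_eq y).
  unfold expected_loss_q.
  assert (prob_minus pm pp p * logloss p y + prob_plus pm pp p * logloss p y = logloss p y)
    by (rewrite <- Rmult_plus_distr_r, prob_minus_plus; ring).
  apply Rmult_le_compat_l with (r := prob_minus pm pp p) in lm; [|assumption].
  apply Rmult_le_compat_l with (r := prob_plus pm pp p) in lp; [|assumption].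
  lra.
Qed.

End TwoPointRounding.

Lemma sin_le_id x : 0 <= x -> sin x <= x.
Proof.
  intros hx. destruct (Req_dec x 0) as [-> | hx0]; [rewrite sin_0; lra|].
  left. apply sin_lt_x. lra.
Qed.

Lemma sin_ge_half x : 0 <= x <= 1 -> x / 2 <= sin x.
Proof.
  intros hx. pose proof PI2_1.
  destruct (sin_bound x 0 ltac:(lra) ltac:(lra)) as [hlb _].
  unfold sin_approx, sin_term in hlb. simpl in hlb.
  nra.
Qed.

Lemma sin_add_le x t : 0 <= x <= PI -> 0 <= t <= PI -> sin (x + t) <= sin x + t.
Proof.
  intros hx ht. rewrite sin_plus.
  pose proof (sin_ge_0 x ltac:(lra) ltac:(lra)). pose proof (sin_ge_0 t ltac:(lra) ltac:(lra)).
  pose proof (COS_bound x). pose proof (COS_bound t). pose proof (sin_le_id t ltac:(lra)).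
  nra.
Qed.

Lemma sin_le_sin_inner h x : 0 <= h -> h <= x -> x <= PI - h -> sin h <= sin x.
Proof.
  intros h0 hx hx'. pose proof PI_RGT_0.
  destruct (Rle_dec x (PI / 2)).
  - apply sin_incr_1; lra.
  - rewrite <- (sin_PI_x x). apply sin_incr_1; lra.
Qed.

Lemma sin_sq_sub_sin_sq a b : sin b ^ 2 - sin a ^ 2 = sin (b - a) * sin (b + a).
Proof.
  rewrite sin_minus, sin_plus.
  pose proof (sin2_cos2 a). pose proof (sin2_cos2 b). unfold Rsqr in *. nra.
Qed.

Lemma sin_sq_gap_le a b h : 0 < h <= 1 -> h / 2 <= a -> a <= b -> b <= PI / 2 - h / 2 ->
  b - a <= h -> (sin b ^ 2 - sin a ^ 2) ^ 2 <= 36 * h ^ 2 * (sin a ^ 2 * (1 - sin a ^ 2)).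
Proof.
  intros hh ha hab hb hba. pose proof PI_RGT_0.
  rewrite sin_sq_sub_sin_sq.
  assert (gap : 0 <= sin (b - a) <= h).
  { split; [apply sin_ge_0|pose proof (sin_le_id (b - a))]; lra. }
  assert (h_le : h <= 2 * sin (2 * a)).
  { pose proof (sin_ge_half h). pose proof (sin_le_sin_inner h (2 * a)). lra. }
  assert (sum : 0 <= sin (b + a) <= 3 * sin (2 * a)).
  { split; [apply sin_ge_0; lra|].
    replace (b + a) with (2 * a + (b - a)) by ring.
    pose proof (sin_add_le (2 * a) (b - a)). lra. }
  assert (double : sin (2 * a) ^ 2 = 4 * (sin a ^ 2 * (1 - sin a ^ 2))).
  { rewrite sin_2a. pose proof (sin2_cos2 a). unfold Rsqr in *. nra. }
  assert (sin (b - a) * sin (b + a) <= h * (3 * sin (2 * a))) by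
    (apply Rmult_le_compat; lra).
  assert (0 <= sin (b - a) * sin (b + a)) by nra.
  assert ((sin (b - a) * sin (b + a)) ^ 2 <= (h * (3 * sin (2 * a))) ^ 2) by
    (apply pow_incr; lra).
  nra.
Qed.

Definition grid_step (K : nat) : R := PI / (2 * INR K).

Definition grid_angle (K j : nat) : R :=
  if Nat.eqb j 0 then grid_step K / 2
  else if Nat.eqb j K then PI / 2 - grid_step K / 2
  else INR j * grid_step K.

Section Grid.

Variable K : nat.
Hypothesis K_ge2 : (2 <= K)%nat.

Lemma INR_K_ge2 : 2 <= INR K.
Proof. replace 2 with (INR 2) by (simpl; ring). apply le_INR, K_ge2. Qed.

Lemma zgrid_sin_sq j : zgrid K j = sin (grid_angle K j) ^ 2.
Proof.
  pose proof INR_K_ge2.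
  unfold zgrid, grid_angle, grid_step.
  destruct (Nat.eqb j 0); [|destruct (Nat.eqb j K)].
  - do 2 f_equal. field. lra.
  - rewrite sin_shift. do 2 f_equal. field. lra.
  - do 2 f_equal. field. lra.
Qed.

Lemma grid_step_bounds : 0 < grid_step K <= PI / 4.
Proof.
  pose proof INR_K_ge2. pose proof PI_RGT_0. unfold grid_step.
  split; [apply Rdiv_lt_0_compat; lra|].
  apply Rmult_le_reg_r with (4 * INR K); [lra|].
  field_simplify; [nra|lra].
Qed.

Lemma grid_mult_step : INR K * grid_step K = PI / 2.
Proof. pose proof INR_K_ge2. unfold grid_step. field. lra. Qed.

Lemma grid_angle_range j : (j <= K)%nat ->
  grid_step K / 2 <= grid_angle K j <= PI / 2 - grid_step K / 2.
Proof.
  intros hj. pose proof grid_step_bounds. pose proof grid_mult_step.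
  pose proof PI_RGT_0. unfold grid_angle.
  destruct (Nat.eqb_spec j 0); [lra|].
  destruct (Nat.eqb_spec j K); [lra|].
  assert (1 <= INR j) by (replace 1 with (INR 1) by reflexivity; apply le_INR; lia).
  assert (INR j <= INR K - 1) by (change 1 with (INR 1); rewrite <- minus_INR by lia; apply le_INR; lia).
  nra.
Qed.

Lemma grid_angle_step i : (i < K)%nat ->
  grid_angle K i <= grid_angle K (S i) <= grid_angle K i + grid_step K.
Proof.
  intros hi. pose proof grid_step_bounds. pose proof grid_mult_step.
  unfold grid_angle.
  change (Nat.eqb (S i) 0) with false; cbv iota.
  destruct (Nat.eqb_spec i 0) as [i0 | i0].
  - subst i. destruct (Nat.eqb_spec 1 K); [lia|]. change (INR 1) with 1. lra.
  - destruct (Nat.eqb_spec i K); [lia|].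
    destruct (Nat.eqb_spec (S i) K) as [iK | iK].
    + assert (INR i = INR K - 1) by (rewrite <- iK, S_INR; ring). nra.
    + rewrite S_INR. lra.
Qed.

Lemma zgrid_bounds j : (j <= K)%nat -> 0 < zgrid K j < 1.
Proof.
  intros hj. rewrite zgrid_sin_sq.
  pose proof (grid_angle_range j hj). pose proof grid_step_bounds. pose proof PI_RGT_0.
  assert (0 < sin (grid_angle K j)) by (apply sin_gt_0; lra).
  assert (sin (grid_angle K j) < 1)
    by (rewrite <- sin_PI2; apply sin_increasing_1; lra).
  split; nra.
Qed.

Lemma zgrid_gap_sq i : (i < K)%nat ->
  (zgrid K (S i) - zgrid K i) ^ 2
  <= 36 * grid_step K ^ 2 * (zgrid K i * (1 - zgrid K i)).
Proof.
  intros hi. rewrite !zgrid_sin_sq.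
  pose proof grid_step_bounds. pose proof PI_4.
  pose proof (grid_angle_range i ltac:(lia)). pose proof (grid_angle_range (S i) hi).
  pose proof (grid_angle_step i hi).
  apply sin_sq_gap_le; lra.
Qed.

End Grid.

Theorem lemma5 :
  exists C : R,
    forall (K : nat), (2 <= K)%nat ->
    forall (p : R), 0 <= p <= 1 ->
    forall (i : nat), (i < K)%nat ->
      zgrid K i <= p < zgrid K (S i) ->
      forall y : R, (y = 0 \/ y = 1) ->
        expected_loss_q (zgrid K i) (zgrid K (S i)) p y - logloss p y
          <= C / (INR K) ^ 2.
Proof.
  exists (9 * PI ^ 2). intros K K_ge2 p _ i hi hp y hy.
  destruct (zgrid_bounds K K_ge2 i ltac:(lia)) as [zi_pos zi_lt1].
  destruct (zgrid_bounds K K_ge2 (S i) hi) as [_ zSi_lt1].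
  eapply Rle_trans; [apply expected_loss_q_sub_le; lra|].
  replace (9 * PI ^ 2 / INR K ^ 2) with (36 * grid_step K ^ 2)
    by (pose proof (INR_K_ge2 K K_ge2); unfold grid_step; field; lra).
  assert (hB : 0 < zgrid K i * (1 - zgrid K i)) by (apply Rmult_lt_0_compat; lra).
  apply Rmult_le_reg_r with (1 := hB).
  unfold Rdiv. rewrite Rmult_assoc, Rinv_l, Rmult_1_r by lra.
  exact (zgrid_gap_sq K K_ge2 i hi).
Qed.
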